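(* As $n\to\infty$ the polynomials $K_n(q,t)$ converge coefficientwise to a formal power series $K(q,t)$, and $$K(q,t)=\sum_{p=0}^{\infty}q^{2p^2}t^{2p(p-1)}\left(1+q^{8p+12}t^{8p+5}\right)\prod_{j=1}^{p}\frac{1+q^{2j+4}t^{2j+1}}{1-q^{2j}t^{2j}}.$$
   Context: For $n\ge1$, call a sequence $(s_0,\dots,s_{n-1})\in\{0,1\}^n$ (positions numbered from 0) admissible if every maximal block of consecutive 1's has length 1 or 2, except that a maximal block of length 3 is allowed if it starts at position 0. The weight of an admissible sequence is the product over its maximal blocks of 1's of: $q^{2k+2}t^{2k}$ for a block of length 1 at position $k$; $q^{2k+8}t^{2k+3}$ for a block of length 2 starting at position $k$; $q^{12}t^5$ for the block of length 3 at positions $0,1,2$. $K_n(q,t)$ is the sum of the weights of all admissible sequences of length $n$. *)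

(* Bivariate formal power series in q,t over int are
   represented by their coefficient functions: F a b = coeff of q^a t^b. *)
From HB Require Import structures.
From mathcomp Require Import all_boot all_order all_algebra.
Set Implicit Arguments. Unset Strict Implicit. Unset Printing Implicit Defensive.
Import Order.TTheory GRing.Theory Num.Theory.
Local Open Scope ring_scope.

Definition series := nat -> nat -> int.

Definition szero : series := fun _ _ => 0.
Definition sone : series := fun a b => ((a == 0%N) && (b == 0%N))%:R.
Definition smono (c d : nat) : series := fun a b => ((a == c) && (b == d))%:R.
Definition sadd (F G : series) : series := fun a b => F a b + G a b.
Definition smul (F G : series) : series :=
  fun a b => \sum_(i < a.+1) \sum_(j < b.+1) F i j * G (a - i)%N (b - j)%N.
(* 1/(1 - q^c t^d) = sum_k q^(c k) t^(d k), for c >= 1 (only used with c >= 2) *)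
Definition sgeom (c d : nat) : series :=
  fun a b => [exists k : 'I_a.+1, (a == c * k)%N && (b == d * k)%N]%:R.

Definition coef_conv (F : nat -> series) (G : series) : Prop :=
  forall a b : nat, exists N : nat, forall n : nat, (N <= n)%N -> F n a b = G a b.

(* maximal blocks of 1's of s (positions numbered from i), as (start, length) *)
Fixpoint blocks_aux (s : seq bool) (i : nat) : seq (nat * nat) :=
  match s with
  | [::] => [::]
  | true :: s' =>
      match blocks_aux s' i.+1 with
      | (j, l) :: r => if j == i.+1 then (i, l.+1) :: r else (i, 1%N) :: (j, l) :: r
      | [::] => [:: (i, 1%N)]
      end
  | false :: s' => blocks_aux s' i.+1
  end.

Definition blocks (s : seq bool) : seq (nat * nat) := blocks_aux s 0.

Definition admissible_block (kl : nat * nat) : bool :=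
  [|| kl.2 == 1%N, kl.2 == 2%N | (kl.2 == 3%N) && (kl.1 == 0%N)].

Definition admissible (s : seq bool) : bool := all admissible_block (blocks s).

(* exponents (of q, of t) of the weight of a block *)
Definition block_wexp (kl : nat * nat) : nat * nat :=
  let: (k, l) := kl in
  if l == 1%N then ((2 * k + 2)%N, (2 * k)%N)
  else if l == 2%N then ((2 * k + 8)%N, (2 * k + 3)%N)
  else (12%N, 5%N).

Definition wexp (s : seq bool) : nat * nat :=
  (\sum_(kl <- blocks s) (block_wexp kl).1, \sum_(kl <- blocks s) (block_wexp kl).2)%N.

Definition Kn (n : nat) : series :=
  fun a b => (#|[set s : n.-tuple bool | admissible s && (wexp s == (a, b))]|)%:Z.

Definition Kterm (p : nat) : series :=
  smul (smono (2 * p ^ 2) (2 * p * (p - 1)))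
    (smul (sadd sone (smono (8 * p + 12) (8 * p + 5)))
       (\big[smul/sone]_(1 <= j < p.+1)
           smul (sadd sone (smono (2 * j + 4) (2 * j + 1))) (sgeom (2 * j) (2 * j)))).

Definition Kpartial (P : nat) : series := \big[sadd/szero]_(p < P) Kterm p.

From HB Require Import structures.
From mathcomp Require Import all_boot all_order all_algebra.
From mathcomp Require Import zify.
From Stdlib Require Import FunctionalExtensionality.

(* Let T_p := q^(2p^2) t^(2p(p-1)) prod_(j=1..p) (1 + q^(2j+4) t^(2j+1)) / (1 - q^(2j) t^(2j))
   ([Kcore p] below), so that the p-th summand of the formula is
   Kterm p = T_p + q^(8p+12) t^(8p+5) T_p.  Call a block of 1's short if its
   length is 1 or 2.  Splitting sequences with p short blocks according to
   their first letters (0, 10 or 110) gives the recursion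
     T_(p+1) = q^(4p+2) t^(4p) T_p + q^(6p+8) t^(6p+3) T_p + q^(2p+2) t^(2p+2) T_(p+1),
   which the product formula also satisfies; hence the coefficient of q^a t^b
   of T_p counts length-n sequences with p short blocks as soon as n >= a + 2.
   An admissible sequence either has only short blocks or is 1110 followed by
   one, which gives the second summand.  Since Kterm p has no monomial q^a t^b
   with a < p, both [Kn n] (n >= a + 4) and [Kpartial P] (P > a) have
   coefficient \sum_(p <= a) [q^a t^b] Kterm p.  Products of series are
   handled through truncations to bivariate polynomials. *)

Set Implicit Arguments. Unset Strict Implicit. Unset Printing Implicit Defensive.
Import Order.TTheory GRing.Theory Num.Theory.
Local Open Scope ring_scope.

Lemma series_ext (F G : series) : (forall a b, F a b = G a b) -> F = G.
Proof.
by move=> eFG; apply: functional_extensionality => a; apply: functional_extensionality.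
Qed.

(* Products of series are computed coefficient
   by coefficient by products of truncations, which transfers the ring laws. *)
Definition trunc (N : nat) (F : series) : {poly {poly int}} :=
  \poly_(i < N) \poly_(j < N) F i j.

Lemma coef_trunc N F i j :
  (trunc N F)`_i`_j = if ((i < N) && (j < N))%N then F i j else 0.
Proof.
rewrite /trunc coef_poly; case: (i < N)%N; last by rewrite coef0.
by rewrite coef_poly.
Qed.

Lemma coef_mul2 (P Q : {poly {poly int}}) a b :
  (P * Q)`_a`_b = \sum_(i < a.+1) \sum_(j < b.+1) P`_i`_j * Q`_(a - i)`_(b - j).
Proof. by rewrite coefM coef_sum; apply: eq_bigr => i _; rewrite coefM. Qed.

Lemma coef_mul2_local (P P' Q Q' : {poly {poly int}}) a b :
    (forall i j, (i <= a)%N -> (j <= b)%N -> P`_i`_j = P'`_i`_j) ->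
    (forall i j, (i <= a)%N -> (j <= b)%N -> Q`_i`_j = Q'`_i`_j) ->
  (P * Q)`_a`_b = (P' * Q')`_a`_b.
Proof.
move=> eP eQ; rewrite !coef_mul2; apply: eq_bigr => i _; apply: eq_bigr => j _.
by rewrite eP ?eQ ?leq_subr // -ltnS.
Qed.

Lemma smul_trunc N F G a b : (a < N)%N -> (b < N)%N ->
  smul F G a b = (trunc N F * trunc N G)`_a`_b.
Proof.
move=> ha hb; rewrite coef_mul2; apply: eq_bigr => i _; apply: eq_bigr => j _.
have hi : (i <= a)%N by rewrite -ltnS.
have hj : (j <= b)%N by rewrite -ltnS.
by rewrite !coef_trunc !(leq_ltn_trans hi ha) ?(leq_ltn_trans hj hb)
  ?(leq_ltn_trans (leq_subr i a) ha) ?(leq_ltn_trans (leq_subr j b) hb).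
Qed.

Lemma trunc_smul N F G a b : (a < N)%N -> (b < N)%N ->
  (trunc N (smul F G))`_a`_b = (trunc N F * trunc N G)`_a`_b.
Proof. by move=> ha hb; rewrite coef_trunc ha hb; apply: smul_trunc. Qed.

Lemma smulC F G : smul F G = smul G F.
Proof.
apply: series_ext => a b; set N := (maxn a b).+1.
by rewrite !(@smul_trunc N) ?ltnS ?leq_maxl ?leq_maxr // mulrC.
Qed.

Lemma smulA F G H : smul F (smul G H) = smul (smul F G) H.
Proof.
apply: series_ext => a b; set N := (maxn a b).+1.
have ltN i j : (i <= a)%N -> (j <= b)%N -> (i < N)%N && (j < N)%N.
  by move=> ha hb; rewrite !ltnS (leq_trans ha (leq_maxl _ _)) (leq_trans hb (leq_maxr _ _)).
have /andP [ha hb] := ltN a b (leqnn a) (leqnn b).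
rewrite !(@smul_trunc N) //.
rewrite (@coef_mul2_local _ (trunc N F) _ (trunc N G * trunc N H)) //; last first.
  by move=> i j hi hj; case/andP: (ltN i j hi hj) => hi' hj'; apply: trunc_smul.
rewrite [RHS](@coef_mul2_local _ (trunc N F * trunc N G) _ (trunc N H)) ?mulrA //.
by move=> i j hi hj; case/andP: (ltN i j hi hj) => hi' hj'; apply: trunc_smul.
Qed.

Lemma trunc_sone N : (0 < N)%N -> trunc N sone = 1.
Proof.
move=> hN; apply/polyP => i; apply/polyP => j.
rewrite coef_trunc coef1 /sone; case: i => [|i] /=; last by rewrite coef0; case: ifP.
by rewrite coef1; case: j => [|j] /=; [rewrite hN | case: ifP].
Qed.

Lemma smul1s F : smul sone F = F.
Proof.
apply: series_ext => a b; set N := (maxn a b).+1.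
have ha : (a < N)%N by rewrite ltnS leq_maxl.
have hb : (b < N)%N by rewrite ltnS leq_maxr.
by rewrite (smul_trunc _ _ ha hb) trunc_sone // mul1r coef_trunc ha hb.
Qed.

HB.instance Definition _ := Monoid.isComLaw.Build series sone smul smulA smulC smul1s.

Lemma smuls1 F : smul F sone = F.
Proof. by rewrite smulC smul1s. Qed.

Lemma smulDr F G H : smul F (sadd G H) = sadd (smul F G) (smul F H).
Proof.
apply: series_ext => a b; rewrite /smul /sadd -big_split; apply: eq_bigr => i _.
by rewrite -big_split; apply: eq_bigr => j _; rewrite mulrDr.
Qed.

Lemma smulDl F G H : smul (sadd G H) F = sadd (smul G F) (smul H F).
Proof. by rewrite smulC smulDr !(smulC F). Qed.

Definition sshift (c d : nat) (F : series) : series :=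
  fun a b => if ((c <= a) && (d <= b))%N then F (a - c)%N (b - d)%N else 0.

Lemma sum_ord_delta (n c : nat) (X : nat -> int) :
  \sum_(i < n) ((i == c :> nat)%:R * X i) = if (c < n)%N then X c else 0.
Proof.
rewrite (eq_bigr (fun i : 'I_n => if (i == c :> nat) then X i else 0)); last first.
  by move=> i _; case: eqP; rewrite ?mul1r ?mul0r.
rewrite -big_mkcond /=; case: ltnP => hc.
  rewrite (big_pred1 (Ordinal hc)) // => i; exact: (inj_eq val_inj).
by rewrite big_pred0 // => i; apply/negbTE; rewrite neq_ltn (leq_trans (ltn_ord i) hc).
Qed.

Lemma smul_smono c d F : smul (smono c d) F = sshift c d F.
Proof.
apply: series_ext => a b; rewrite /smul /smono /sshift.
under eq_bigr => i _ do under eq_bigr => j _ do rewrite -mulnb natrM -mulrA.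
under eq_bigr => i _ do rewrite -mulr_sumr.
rewrite (sum_ord_delta _ _ (fun i => \sum_(j < b.+1) ((j == d :> nat)%:R * F (a - i)%N (b - j)%N))).
rewrite ltnS; case: (c <= a)%N => //.
by rewrite (sum_ord_delta _ _ (fun j => F (a - c)%N (b - j)%N)) ltnS.
Qed.

Lemma smono_mul c d c' d' :
  smul (smono c d) (smono c' d') = smono (c + c') (d + d').
Proof.
rewrite smul_smono; apply: series_ext => a b; rewrite /sshift /smono.
case: ifP => [/andP [ha hb] | hcd].
  by congr (nat_of_bool _)%:R; apply/andP/andP => -[/eqP e1 /eqP e2]; split; apply/eqP; lia.
case: (a =P c + c')%N => [ea|//]; case: (b =P d + d')%N => [eb|]; last by rewrite andbF.
by move: hcd; rewrite ea eb !leq_addr.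
Qed.

Lemma sgeom_coef c a b : (0 < c)%N ->
  sgeom c c a b = ((a == b) && (c %| a))%N%:R.
Proof.
move=> hc; rewrite /sgeom; congr (nat_of_bool _)%:R; apply/existsP/andP.
  by case=> k /andP [/eqP ea /eqP eb]; rewrite ea eb dvdn_mulr.
case=> /eqP <- hd; have hk : (a %/ c < a.+1)%N by rewrite ltnS leq_div.
by exists (Ordinal hk); rewrite /= mulnC divnK // eqxx.
Qed.

Lemma sgeom_rec c : (0 < c)%N -> sgeom c c = sadd sone (sshift c c (sgeom c c)).
Proof.
move=> hc; apply: series_ext => a b; rewrite /sadd /sone /sshift !sgeom_coef //.
case: a => [|a]; first by rewrite leqNgt hc dvdn0 andbT addr0; case: b.
rewrite add0r; case: ifP => [/andP [ha hb] | hab].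
  by rewrite (dvdn_subl ha (dvdnn c)) eqn_sub2rE.
case: eqP => [eab|//]; case: (boolP (c %| a.+1)%N) => [/(dvdn_leq (ltn0Sn a)) hca|//].
by move: hab; rewrite -eab hca.
Qed.

Definition Kfactor (j : nat) : series :=
  smul (sadd sone (smono (2 * j + 4) (2 * j + 1))) (sgeom (2 * j) (2 * j)).

Definition Kprod (p : nat) : series := \big[smul/sone]_(1 <= j < p.+1) Kfactor j.

Definition Kcore (p : nat) : series :=
  smul (smono (2 * p ^ 2) (2 * p * (p - 1))) (Kprod p).

Lemma Kterm_split p : Kterm p = sadd (Kcore p) (sshift (8 * p + 12) (8 * p + 5) (Kcore p)).
Proof.
rewrite /Kterm -/(Kprod p) smulDl smul1s smulDr -/(Kcore p) -smul_smono.
by rewrite smulA (smulC (smono _ _) (smono _ _)) -smulA.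
Qed.

(* Clearing the denominator of the last factor:
   P_(p+1) = P_p + q^(2p+6) t^(2p+3) P_p + q^(2p+2) t^(2p+2) P_(p+1). *)
Lemma Kprod_rec p : Kprod p.+1 =
  sadd (sadd (Kprod p) (sshift (2 * p + 6) (2 * p + 3) (Kprod p)))
       (sshift (2 * p + 2) (2 * p + 2) (Kprod p.+1)).
Proof.
have eP : Kprod p.+1 = smul (Kprod p) (Kfactor p.+1) by rewrite /Kprod big_nat_recr.
have -> : (2 * p + 6 = 2 * p.+1 + 4)%N by lia.
have -> : (2 * p + 3 = 2 * p.+1 + 1)%N by lia.
have -> : (2 * p + 2 = 2 * p.+1)%N by lia.
rewrite -!smul_smono {1}eP /Kfactor.
set y := smono (2 * p.+1 + 4) _; set x := smono (2 * p.+1) _; set G := sgeom _ _.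
rewrite {1}/G sgeom_rec ?muln_gt0 // -/G -smul_smono -/x.
rewrite !smulDr !smuls1 smulDr smuls1 (smulC (Kprod p) y); congr sadd.
rewrite eP /Kfactor -/y -/G (smulA (sadd sone y) x G) (smulC (sadd sone y) x) -smulA.
by rewrite smulA (smulC (Kprod p) x) -smulA.
Qed.

(* The recursion satisfied by T_p; it is the generating-function form of the
   decomposition of sequences with short blocks by their first letters. *)
Lemma Kcore_rec p : Kcore p.+1 =
  sadd (sadd (sshift (4 * p + 2) (4 * p) (Kcore p)) (sshift (6 * p + 8) (6 * p + 3) (Kcore p)))
       (sshift (2 * p + 2) (2 * p + 2) (Kcore p.+1)).
Proof.
have eN : smono (2 * p.+1 ^ 2) (2 * p.+1 * (p.+1 - 1)) =
    smul (smono (4 * p + 2) (4 * p)) (smono (2 * p ^ 2) (2 * p * (p - 1))).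
  by rewrite smono_mul; congr smono; rewrite ?expnS ?expn0 ?muln1; case: p => [|p] //=; nia.
have eM : smono (6 * p + 8) (6 * p + 3) =
    smul (smono (4 * p + 2) (4 * p)) (smono (2 * p + 6) (2 * p + 3)).
  by rewrite smono_mul; congr smono; lia.
rewrite -!smul_smono eM {1}/Kcore Kprod_rec -!smul_smono eN !smulDr -/(Kcore p.+1).
congr sadd; first congr sadd.
- by rewrite -smulA.
- by rewrite -!smulA; congr smul; rewrite smulA (smulC (smono (2 * p ^ 2) _)) -smulA.
- by rewrite -eN smulA (smulC _ (smono (2 * p + 2) _)) -smulA.
Qed.

Lemma Kcore0 : Kcore 0 = sone.
Proof. by rewrite /Kcore /Kprod big_geq // smuls1. Qed.

(* T_p has no monomial q^a t^b with a < p (its q-degree is at least 2p^2). *)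
Lemma Kcore_low p a b : (a < p)%N -> Kcore p a b = 0.
Proof.
move=> hap; rewrite /Kcore smul_smono /sshift; case: ifP => // /andP [h _].
have : (p <= p ^ 2)%N by rewrite expnS expn1 leq_pmull // (leq_ltn_trans _ hap).
lia.
Qed.

Local Close Scope ring_scope.

(* The list of all binary sequences of length n, without repetition, which
   turns cardinalities of sets of tuples into counts. *)
Fixpoint bitseqs (n : nat) : seq (seq bool) :=
  if n is n'.+1 then [seq false :: s | s <- bitseqs n'] ++ [seq true :: s | s <- bitseqs n']
  else [:: [::]].

Lemma mem_bitseqs n s : (s \in bitseqs n) = (size s == n).
Proof.
elim: n s => [|n IH] [|c s] //=; rewrite mem_cat.
  by apply/negbTE; rewrite negb_or; apply/andP; split; apply/mapP => -[].
have inj (x : bool) : injective (cons x) by move=> u v [].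
have notin (x : bool) : x :: s \notin [seq ~~ x :: t | t <- bitseqs n].
  by apply/mapP => -[t _ []]; case: x.
by case: c; rewrite ?(negbTE (notin true)) ?(negbTE (notin false)) ?orbF
  (mem_map (inj _)) IH.
Qed.

Lemma uniq_bitseqs n : uniq (bitseqs n).
Proof.
elim: n => [|n IH] //=; rewrite cat_uniq !map_inj_uniq ?IH //; try by move=> u v [].
by rewrite andbT /=; apply/hasPn => _ /mapP [s _ ->]; apply/mapP => -[].
Qed.

Lemma card_tuples_count n (P : pred (seq bool)) :
  #|[set s : n.-tuple bool | P s]| = count P (bitseqs n).
Proof.
rewrite cardsE cardE /enum_mem size_filter -(count_map (@tval n bool)).
apply/permP/uniq_perm; first by rewrite map_inj_uniq -?enumT ?enum_uniq //; apply: val_inj.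
  exact: uniq_bitseqs.
move=> s; rewrite mem_bitseqs; apply/mapP/idP => [[t _ ->]|/eqP hs].
  by rewrite size_tuple.
by exists (Tuple (introT eqP hs)); rewrite -?enumT ?mem_enum.
Qed.

Lemma count_bitseqsS (P : pred (seq bool)) n :
  count P (bitseqs n.+1) =
  count (fun s => P (false :: s)) (bitseqs n) + count (fun s => P (true :: s)) (bitseqs n).
Proof. by rewrite count_cat !count_map. Qed.

Lemma count_bitseqs_runs (P : pred (seq bool)) n :
  count P (bitseqs n.+3) =
  count (fun s => P (false :: s)) (bitseqs n.+2) +
  count (fun s => P [:: true, false & s]) (bitseqs n.+1) +
  count (fun s => P [:: true, true, false & s]) (bitseqs n) +
  count (fun s => P [:: true, true, true & s]) (bitseqs n).
Proof.
rewrite count_bitseqsS -!addnA; congr addn.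
by rewrite count_bitseqsS; congr addn; apply: count_bitseqsS.
Qed.

Lemma count_guarded (T : Type) (g : bool) (Q : pred T) l :
  count (fun x => g && Q x) l = if g then count Q l else 0.
Proof. by case: g; rewrite ?count_pred0. Qed.

Lemma count_partition (T : eqType) (P : pred T) (f : T -> nat) N (l : seq T) :
  {in l, forall x, f x < N} ->
  count P l = \sum_(p < N) count (fun x => P x && (f x == p)) l.
Proof.
elim: l => [|x l IH] hf /=; first by rewrite big1.
rewrite big_split /= -IH; last by move=> y hy; apply: hf; rewrite inE hy orbT.
have hx : f x < N by apply: hf; rewrite inE eqxx.
rewrite (bigD1 (Ordinal hx)) //= eqxx andbT big1 ?addn0 // => i hi.
case: (f x =P i) => [e|]; last by rewrite andbF.
by move: hi; rewrite -(inj_eq val_inj) /= e eqxx.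
Qed.

Definition shift_block (k : nat) (kl : nat * nat) : nat * nat := (kl.1 + k, kl.2).

Lemma blocks_aux_shift s i k :
  blocks_aux s (i + k) = map (shift_block k) (blocks_aux s i).
Proof.
elim: s i => [|[] s IH] i //=; rewrite -[blocks_aux s _]/(blocks_aux s (i.+1 + k)) IH //.
case: (blocks_aux s i.+1) => [|[j l] r] //=; rewrite /shift_block /=.
by rewrite -addSn eqn_add2r; case: ifP.
Qed.

Lemma blocks_aux_from s i : blocks_aux s i = map (shift_block i) (blocks s).
Proof. by rewrite -(blocks_aux_shift s 0 i). Qed.

Lemma blocks_extend s i L r :
  blocks_aux s i.+1 = (i.+1, L) :: r -> blocks_aux (true :: s) i = (i, L.+1) :: r.
Proof. by move=> /= ->; rewrite eqxx. Qed.

Lemma blocks_run k s i :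
  blocks_aux (nseq k.+1 true ++ false :: s) i = (i, k.+1) :: blocks_aux s (i + k.+2).
Proof.
elim: k i => [|k IH] i.
  rewrite /= addn2 blocks_aux_from; case: (blocks s) => [|[j l] r] //=.
  by rewrite ifN //; apply/eqP; rewrite /shift_block /=; lia.
by rewrite -addSnnS; apply: blocks_extend; apply: IH.
Qed.

Lemma blocks_long_run k s i :
  exists L r, (k < L)%N /\ blocks_aux (nseq k.+1 true ++ s) i = (i, L) :: r.
Proof.
elim: k i => [|k IH] i.
  rewrite /=; case: (blocks_aux s i.+1) => [|[j l] r]; first by exists 1%N, [::].
  by case: ifP => _; [exists l.+1, r | exists 1%N, ((j, l) :: r)].
have [L [r [hkL e]]] := IH i.+1.
by exists L.+1, r; split; last by apply: blocks_extend.
Qed.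

Lemma size_blocks s i : size (blocks_aux s i) <= size s.
Proof.
elim: s i => [|[] s IH] i //=; last exact: leq_trans (IH _) _.
have := IH i.+1; case: (blocks_aux s i.+1) => [|[j l] r] //= h.
by case: ifP => _ /=; [apply: leq_trans h _ |].
Qed.

Lemma blocks_false s : blocks (false :: s) = map (shift_block 1) (blocks s).
Proof. exact: (blocks_aux_from s 1). Qed.

Lemma blocks_run_head k s :
  blocks (nseq k.+1 true ++ false :: s) = (0, k.+1) :: map (shift_block k.+2) (blocks s).
Proof. by rewrite /blocks blocks_run add0n -blocks_aux_from. Qed.

Definition short_block (kl : nat * nat) : bool := (kl.2 == 1) || (kl.2 == 2).

Definition wexp_blocks (bl : seq (nat * nat)) : nat * nat :=
  (\sum_(kl <- bl) (block_wexp kl).1, \sum_(kl <- bl) (block_wexp kl).2).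

Definition short_of (p a b : nat) (bl : seq (nat * nat)) : bool :=
  [&& all short_block bl, wexp_blocks bl == (a, b) & size bl == p].

Lemma wexp_blocks_cat u v :
  wexp_blocks (u ++ v) = ((wexp_blocks u).1 + (wexp_blocks v).1,
                          (wexp_blocks u).2 + (wexp_blocks v).2).
Proof. by rewrite /wexp_blocks !big_cat. Qed.

Lemma wexp_blocks1 kl : wexp_blocks [:: kl] = block_wexp kl.
Proof. by rewrite /wexp_blocks !big_seq1; case: (block_wexp kl). Qed.

Lemma wexp_blocks_shift k bl : all short_block bl ->
  wexp_blocks (map (shift_block k) bl) =
  ((wexp_blocks bl).1 + 2 * k * size bl, (wexp_blocks bl).2 + 2 * k * size bl).
Proof.
rewrite /wexp_blocks /=; elim: bl => [|[x l] bl IH] /=; first by rewrite !big_nil muln0.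
case/andP=> hl /IH [e1 e2]; rewrite !big_cons e1 e2.
by case/orP: hl => /= /eqP -> /=; congr pair; lia.
Qed.

Lemma short_of_prefix pre k bl p a b u v :
    all short_block pre -> wexp_blocks pre = (u, v) ->
  let m := size pre in let t := 2 * k * (p - m) in
  short_of p a b (pre ++ map (shift_block k) bl) =
  [&& m <= p, u + t <= a, v + t <= b & short_of (p - m) (a - u - t) (b - v - t) bl].
Proof.
move=> hpre hw m t; rewrite /short_of all_cat hpre all_map size_cat size_map.
case hbl: (all short_block bl); last by rewrite !andbF.
rewrite wexp_blocks_cat wexp_blocks_shift // hw -/m; case: (wexp_blocks bl) => x y /=.
case: (leqP m p) => hmp /=; last by apply/negbTE; apply/nandP; right; apply/eqP; lia.
case: (size bl =P p - m) => e; last by rewrite !andbF; apply/negbTE/nandP; right; apply/eqP; lia.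
rewrite /t -e !andbT !xpair_eqE; apply/andP/and3P.
  by case=> /andP [/eqP e1 /eqP e2] _; split; [lia | lia | apply/andP; split; apply/eqP; lia].
by case=> h1 h2 /andP [/eqP e1 /eqP e2]; split; [apply/andP; split |]; apply/eqP; lia.
Qed.

Lemma short_of_false p a b s :
  short_of p a b (blocks (false :: s)) =
  ((2 * p <= a) && (2 * p <= b)) && short_of p (a - 2 * p) (b - 2 * p) (blocks s).
Proof.
rewrite blocks_false -[map _ _]cat0s (@short_of_prefix [::] 1 _ p a b 0 0) //=; last first.
  by rewrite /wexp_blocks !big_nil.
by rewrite !subn0 !muln1 andbA.
Qed.

Lemma short_of_run1 p a b s :
  short_of p.+1 a b (blocks [:: true, false & s]) =
  ((4 * p + 2 <= a) && (4 * p <= b)) && short_of p (a - (4 * p + 2)) (b - 4 * p) (blocks s).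
Proof.
rewrite (blocks_run_head 0) -cat1s (@short_of_prefix _ 2 _ p.+1 a b 2 0) ?wexp_blocks1 //=.
by rewrite subn0 andbA subSS subn0 add0n -subnDA (addnC 2).
Qed.

Lemma short_of_run2 p a b s :
  short_of p.+1 a b (blocks [:: true, true, false & s]) =
  ((6 * p + 8 <= a) && (6 * p + 3 <= b)) &&
  short_of p (a - (6 * p + 8)) (b - (6 * p + 3)) (blocks s).
Proof.
rewrite (blocks_run_head 1) -cat1s (@short_of_prefix _ 3 _ p.+1 a b 8 3) ?wexp_blocks1 //=.
by rewrite andbA subSS subn0 -!subnDA (addnC 8) (addnC 3).
Qed.

Lemma short_of_long_run p a b s : short_of p a b (blocks [:: true, true, true & s]) = false.
Proof.
have [L [r [hL e]]] := blocks_long_run 2 s 0.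
rewrite /blocks e /short_of /= /short_block /=.
by case: L hL {e} => [|[|[|L]]].
Qed.

Definition adm_of (a b : nat) (s : seq bool) : bool := admissible s && (wexp s == (a, b)).

Definition short_seq (a b : nat) (s : seq bool) : bool :=
  all short_block (blocks s) && (wexp s == (a, b)).

Lemma admissible_shifted k bl :
  0 < k -> all admissible_block (map (shift_block k) bl) = all short_block bl.
Proof.
move=> hk; rewrite all_map; apply: eq_all => -[x l].
by rewrite /admissible_block /= addn_eq0 (negbTE (lt0n_neq0 hk)) !andbF orbF.
Qed.

Lemma adm_of_false a b s : adm_of a b (false :: s) = short_seq a b (false :: s).
Proof.
by rewrite /adm_of /short_seq /admissible blocks_false admissible_shifted // all_map.
Qed.

Lemma adm_of_run k a b : k < 2 -> forall s,
  adm_of a b (nseq k.+1 true ++ false :: s) = short_seq a b (nseq k.+1 true ++ false :: s).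
Proof.
move=> hk s; rewrite /adm_of /short_seq /admissible blocks_run_head /= admissible_shifted //.
by rewrite all_map /admissible_block /short_block /=; case: k hk => [|[]].
Qed.

Lemma adm_of_long_run a b s : adm_of a b [:: true, true, true, true & s] = false.
Proof.
have [L [r [hL e]]] := blocks_long_run 3 s 0.
rewrite /adm_of /admissible /blocks e /= /admissible_block /=.
by case: L hL {e} => [|[|[|[|L]]]].
Qed.

Lemma short_seq_long_run a b s : short_seq a b [:: true, true, true & s] = false.
Proof.
have [L [r [hL e]]] := blocks_long_run 2 s 0.
rewrite /short_seq /blocks e /= /short_block /=.
by case: L hL {e} => [|[|[|L]]].
Qed.

Lemma count_adm_of a b m :
  count (adm_of a b) (bitseqs m.+4) =
  count (short_seq a b) (bitseqs m.+4) +
  count (fun s => adm_of a b [:: true, true, true, false & s]) (bitseqs m).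
Proof.
rewrite (count_bitseqsS (adm_of a b)) (count_bitseqsS (short_seq a b)).
rewrite (eq_count (adm_of_false a b)) -!addnA; congr addn.
rewrite !count_bitseqs_runs (eq_count (@adm_of_run 0 a b isT)).
rewrite (eq_count (@adm_of_run 1 a b isT)).
rewrite (eq_count (adm_of_long_run a b)).
rewrite (eq_count (a1 := fun s => short_seq a b [:: true, true, true, false & s])
  (fun s => short_seq_long_run a b (false :: s))).
rewrite (eq_count (a1 := fun s => short_seq a b [:: true, true, true, true & s])
  (fun s => short_seq_long_run a b (true :: s))).
by rewrite !count_pred0 !addn0.
Qed.

Lemma adm_of_run3 p a b s :
  adm_of a b [:: true, true, true, false & s] && (size (blocks s) == p) =
  ((8 * p + 12 <= a) && (8 * p + 5 <= b))%N &&
  short_of p (a - (8 * p + 12)) (b - (8 * p + 5)) (blocks s).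
Proof.
rewrite /adm_of /admissible /wexp (blocks_run_head 2) /= admissible_shifted //.
rewrite /short_of; case hs: (all short_block (blocks s)); last by rewrite !andbF.
rewrite -cat1s -/(wexp_blocks _) wexp_blocks_cat wexp_blocks1 wexp_blocks_shift //.
case: (wexp_blocks (blocks s)) => x y /=.
case: (size (blocks s) =P p) => [->|]; last by rewrite !andbF.
rewrite !andbT !xpair_eqE; apply/andP/and3P.
  by case=> /eqP e1 /eqP e2; split; [apply/andP; split | apply/eqP | apply/eqP]; lia.
by case=> /andP [h1 h2] /eqP e1 /eqP e2; split; apply/eqP; lia.
Qed.

Lemma count_by_blocks (Q : nat -> pred (seq bool)) n :
  count (fun s => Q (size (blocks s)) s) (bitseqs n) =
  \sum_(p < n.+1) count (fun s => Q p s && (size (blocks s) == p)) (bitseqs n).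
Proof.
rewrite (@count_partition _ _ (fun s => size (blocks s)) n.+1); last first.
  by move=> s; rewrite mem_bitseqs => /eqP <-; rewrite ltnS size_blocks.
apply: eq_bigr => p _; apply: eq_count => s.
by case: (size (blocks s) =P p) => [->|]; rewrite ?andbF.
Qed.

Local Open Scope ring_scope.

Definition Nshort (n p : nat) : series :=
  fun a b => (count (fun s => short_of p a b (blocks s)) (bitseqs n))%:Z.

Lemma Nshort_rec n p : Nshort n.+3 p.+1 =
  sadd (sadd (sshift (4 * p + 2) (4 * p) (Nshort n.+1 p))
             (sshift (6 * p + 8) (6 * p + 3) (Nshort n p)))
       (sshift (2 * p + 2) (2 * p + 2) (Nshort n.+2 p.+1)).
Proof.
apply: series_ext => a b; rewrite /Nshort /sadd /sshift count_bitseqs_runs.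
rewrite (eq_count (short_of_long_run _ _ _)) count_pred0 addn0.
rewrite (eq_count (short_of_false _ _ _)) (eq_count (short_of_run1 _ _ _)).
rewrite (eq_count (short_of_run2 _ _ _)) !count_guarded (_ : 2 * p.+1 = 2 * p + 2)%N; last by lia.
by rewrite -addnA addnC !PoszD !(fun_if Posz).
Qed.

Lemma count_no_blocks n : count (fun s => blocks s == [::]) (bitseqs n) = 1%N.
Proof.
elim: n => [|n IH] //; rewrite count_bitseqsS.
rewrite (eq_count (a2 := fun s => blocks s == [::])); last first.
  by move=> s; rewrite blocks_false; case: (blocks s).
rewrite IH (eq_count (a2 := pred0)) ?count_pred0 // => s.
by have [L [r [_ e]]] := blocks_long_run 0 s 0; rewrite /blocks e.
Qed.

Lemma Nshort0 n : Nshort n 0 = sone.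
Proof.
apply: series_ext => a b; rewrite /Nshort /sone.
rewrite (eq_count (a2 := fun s => ((a == 0) && (b == 0))%N && (blocks s == [::]))).
  by rewrite count_guarded count_no_blocks; case: (_ && _).
move=> s; rewrite /short_of size_eq0; case: (blocks s) => [|kl r] /=; last by rewrite !andbF.
by rewrite /wexp_blocks !big_nil xpair_eqE ![0%N == _]eq_sym.
Qed.

Lemma block_wexp_pos kl : (0 < (block_wexp kl).1)%N.
Proof.
by case: kl => k l; rewrite /block_wexp /=; case: ifP => _; [|case: ifP => _] => /=; lia.
Qed.

Lemma short_of_weight0 p b bl : short_of p.+1 0 b bl = false.
Proof.
case: bl => [|kl r]; rewrite /short_of ?andbF //= /wexp_blocks big_cons xpair_eqE.
by rewrite addn_eq0 eqn0Ngt block_wexp_pos !andbF.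
Qed.

(* The coefficient of q^a t^b in Nshort n p is that of T_p once n >= a + 2:
   both sides satisfy the same recursion, by strong induction on n. *)
Lemma Nshort_Kcore n p a b : (a + 2 <= n)%N -> Nshort n p a b = Kcore p a b.
Proof.
elim/ltn_ind: n p a b => n IH [|p] a b ha; first by rewrite Nshort0 Kcore0.
case: n IH ha => [|[|[|n]]] IH ha; try lia.
  have -> : a = 0%N by lia.
  rewrite Kcore_low // /Nshort (eq_count (a2 := pred0)) ?count_pred0 // => s /=.
  by rewrite short_of_weight0.
rewrite Nshort_rec Kcore_rec /sadd /sshift.
by congr (_ + _ + _); case: ifP => // /andP [h1 h2]; apply: IH; lia.
Qed.

Lemma count_short_seq n a b :
  (count (short_seq a b) (bitseqs n))%:Z = \sum_(p < n.+1) Nshort n p a b.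
Proof.
rewrite (count_by_blocks (fun _ => short_seq a b)) -natz natr_sum.
apply: eq_bigr => p _; rewrite natz /Nshort.
by congr Posz; apply: eq_count => s; rewrite /short_seq /short_of andbA.
Qed.

Lemma count_run3 m a b :
  (count (fun s => adm_of a b [:: true, true, true, false & s]) (bitseqs m))%:Z =
  \sum_(p < m.+1) sshift (8 * p + 12) (8 * p + 5) (Nshort m p) a b.
Proof.
rewrite (count_by_blocks (fun _ s => adm_of a b [:: true, true, true, false & s])).
rewrite -natz natr_sum; apply: eq_bigr => p _.
by rewrite natz (eq_count (adm_of_run3 p a b)) count_guarded /sshift; case: ifP.
Qed.

Lemma sum_ord_trunc (R : nmodType) (f : nat -> R) N M : (M <= N)%N ->
  (forall p, (M <= p)%N -> f p = 0) -> \sum_(p < N) f p = \sum_(p < M) f p.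
Proof.
move=> hMN hf; rewrite -(subnKC hMN); elim: (N - M)%N => [|k IH]; first by rewrite addn0.
by rewrite addnS big_ord_recr /= IH hf ?addr0 // leq_addr.
Qed.

Lemma Kcore_shift_low p c d a b : (a < p)%N -> sshift c d (Kcore p) a b = 0.
Proof. by move=> hap; rewrite /sshift; case: ifP => // _; apply: Kcore_low; lia. Qed.

Lemma Kterm_low p a b : (a < p)%N -> Kterm p a b = 0.
Proof. by move=> hap; rewrite Kterm_split /sadd Kcore_low // Kcore_shift_low // addr0. Qed.

Lemma Kn_coef m a b : (a <= m)%N -> Kn m.+4 a b = \sum_(p < a.+1) Kterm p a b.
Proof.
move=> ham; rewrite /Kn (card_tuples_count _ (adm_of a b)) count_adm_of PoszD.
rewrite count_short_seq count_run3.
have -> : \sum_(p < m.+4.+1) Nshort m.+4 p a b = \sum_(p < a.+1) Kcore p a b.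
  rewrite -(@sum_ord_trunc _ (fun p => Kcore p a b) m.+4.+1); last 2 first.
  - by lia.
  - by move=> p hp; apply: Kcore_low.
  by apply: eq_bigr => p _; apply: Nshort_Kcore; lia.
have -> : \sum_(p < m.+1) sshift (8 * p + 12) (8 * p + 5) (Nshort m p) a b =
          \sum_(p < a.+1) sshift (8 * p + 12) (8 * p + 5) (Kcore p) a b.
  rewrite -(@sum_ord_trunc _ (fun p : nat => sshift (8 * p + 12) (8 * p + 5) (Kcore p) a b) m.+1).
  - apply: eq_bigr => p _; rewrite /sshift; case: ifP => // /andP [h1 _].
    by apply: Nshort_Kcore; lia.
  - by [].
  - by move=> p hp; apply: Kcore_shift_low.
by rewrite -big_split; apply: eq_bigr => p _; rewrite Kterm_split.
Qed.

Lemma Kpartial_coef P a b : (a < P)%N -> Kpartial P a b = \sum_(p < a.+1) Kterm p a b.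
Proof.
move=> haP; rewrite /Kpartial (big_morph (fun F : series => F a b) (id1 := 0) (op1 := +%R)) //.
by apply: (@sum_ord_trunc int (fun p => Kterm p a b)) => // p; apply: Kterm_low.
Qed.

Theorem mainTheorem11 :
  exists K : series, coef_conv Kn K /\ coef_conv Kpartial K.
Proof.
exists (fun a b => \sum_(p < a.+1) Kterm p a b); split => a b.
  exists (a + 4)%N => n han; rewrite -(subnK (leq_trans (leq_addl a 4) han)) addn4.
  by apply: Kn_coef; lia.
by exists a.+1 => P haP; apply: Kpartial_coef.
Qed.
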